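(* Let $\theta>0$, $\nu\in\mathbb{C}$ with $\operatorname{Re}\nu>0$, and $s=\sigma+i\tau\in\mathbb{C}$. Then \[ |\Gamma(s,\theta,\nu)|\le 2^{\sigma}e^{-\operatorname{Re}(\nu)\theta/2}\,\Gamma\Big(\sigma,\frac{\theta}{2},\operatorname{Re}(\nu)\Big). \]
   Context: For $\nu$ with $\operatorname{Re}\nu>0$, $\theta>0$, $s\in\mathbb{C}$: $\Gamma(s,\theta,\nu)=\int_\theta^{+\infty}e^{-\nu y}y^{s-1}\,dy$. *)

From Stdlib Require Import Reals.
From Coquelicot Require Export Coquelicot.
Open Scope R_scope.

Definition Cexp (z : C) : C :=
  (exp (Re z) * cos (Im z), exp (Re z) * sin (Im z)).

Definition Rcpow (y : R) (s : C) : C := Cexp (RtoC (ln y) * s)%C.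

Definition Gamma_inc (s : C) (theta : R) (nu : C) : C :=
  @RInt_gen C_R_CompleteNormedModule
    (fun y : R => (Cexp (- (nu * RtoC y)) * Rcpow y (s - 1))%C)
    (at_point theta) (Rbar_locally p_infty).

(* With a = Re nu and sigma = Re s the integrand has modulus e^{-a y} y^{sigma-1}.
   For y >= theta, e^{-a y} <= e^{-a theta/2} e^{-a y/2}; after the substitution y = 2t
   the bound e^{-a theta/2} \int_theta^oo e^{-a y/2} y^{sigma-1} dy becomes
   2^sigma e^{-a theta/2} \int_{theta/2}^oo e^{-a t} t^{sigma-1} dt.  All improper
   integrals converge by comparison, since y^{sigma-1} <= C e^{a y/2} for y >= theta/2. *)

From Stdlib Require Import Reals Lra.
From Coquelicot Require Import Coquelicot.
Open Scope R_scope.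

Lemma is_lim_scal_p_infty (c : R) : 0 < c -> is_lim (fun y => c * y) p_infty p_infty.
Proof.
  intros Hc P [M HM]. exists (M / c). intros x Hx. apply HM.
  apply (Rmult_lt_compat_l c) in Hx; [|exact Hc].
  replace (c * (M / c)) with M in Hx by (field; lra). exact Hx.
Qed.

Lemma filter_prod_at_point_p_infty (a : R) (P : R -> R -> Prop) :
  (forall b, a < b -> P a b) ->
  filter_prod (at_point a) (Rbar_locally p_infty) (fun ab => P (fst ab) (snd ab)).
Proof.
  intros HP. apply Filter_prod with (fun x => x = a) (fun b => a < b).
  - reflexivity.
  - exists a. tauto.
  - intros x y -> Hy. exact (HP y Hy).
Qed.

Section ImproperIntegral.

Context {V : CompleteNormedModule R_AbsRing}.

Lemma is_RInt_gen_at_point_p_infty (f : R -> V) (a : R) (l : V) :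
  (forall b, a <= b -> ex_RInt f a b) ->
  filterlim (fun b => RInt f a b) (Rbar_locally p_infty) (locally l) ->
  is_RInt_gen f (at_point a) (Rbar_locally p_infty) l.
Proof.
  intros Hf Hlim P HP.
  apply Filter_prod with (fun x => x = a) (fun b => a <= b /\ P (RInt f a b)).
  - reflexivity.
  - apply filter_and; [exists a; intros; lra | exact (Hlim P HP)].
  - intros x y -> [Hy HPy]. exists (RInt f a y). split; [apply RInt_correct, Hf|]; auto.
Qed.

Lemma norm_minus_RInt_le (f : R -> V) (g : R -> R) (a u v : R) :
  a <= u <= v -> ex_RInt f a v -> ex_RInt g a v ->
  (forall x, u <= x <= v -> norm (f x) <= g x) ->
  norm (minus (RInt f a v) (RInt f a u)) <= RInt g a v - RInt g a u.
Proof.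
  intros Hauv Hf Hg Hfg.
  assert (Hf1 : ex_RInt f a u) by (apply ex_RInt_Chasles_1 with v; auto).
  assert (Hf2 : ex_RInt f u v) by (apply ex_RInt_Chasles_2 with a; auto).
  assert (Hg1 : ex_RInt g a u)
    by (apply (ex_RInt_Chasles_1 (V := R_CompleteNormedModule)) with v; auto).
  assert (Hg2 : ex_RInt g u v)
    by (apply (ex_RInt_Chasles_2 (V := R_CompleteNormedModule)) with a; auto).
  rewrite <- (RInt_Chasles f a u v), <- (RInt_Chasles (V := R_CompleteNormedModule) g a u v)
    by assumption.
  replace (minus (plus (RInt f a u) (RInt f u v)) (RInt f a u)) with (RInt f u v).
  2: { unfold minus. rewrite (plus_comm (RInt f a u)), <- plus_assoc, (plus_opp_r (G := V)).
       symmetry; apply plus_zero_r. }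
  change (plus (RInt g a u) (RInt g u v)) with (RInt g a u + RInt g u v).
  rewrite Rplus_minus_l.
  apply norm_RInt_le with f g u v; [lra | exact Hfg | apply RInt_correct; exact Hf2 |].
  apply (RInt_correct (V := R_CompleteNormedModule)); exact Hg2.
Qed.

Lemma ex_lim_RInt_dominated (f : R -> V) (g : R -> R) (a : R) :
  (forall b, a <= b -> ex_RInt f a b) -> (forall b, a <= b -> ex_RInt g a b) ->
  (forall x, a <= x -> norm (f x) <= g x) ->
  (exists lg, filterlim (fun b => RInt g a b) (Rbar_locally p_infty) (locally lg)) ->
  exists l, filterlim (fun b => RInt f a b) (Rbar_locally p_infty) (locally l).
Proof.
  intros Hf Hg Hfg Hlg.
  apply (filterlim_locally_cauchy (F := Rbar_locally p_infty)).
  intros eps.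
  destruct (proj2 (filterlim_locally_cauchy (U := R_CompleteSpace)
                     (fun b => RInt g a b)) Hlg eps) as [P [HP HPg]].
  exists (fun b => a <= b /\ P b). split.
  { apply filter_and; [exists a; intros; lra | exact HP]. }
  assert (Hle : forall u v, a <= u <= v -> P u -> P v ->
            ball (RInt f a u) eps (RInt f a v)).
  { intros u v Huv Pu Pv. apply (@norm_compat1 R_AbsRing V).
    apply Rle_lt_trans with (RInt g a v - RInt g a u).
    { apply norm_minus_RInt_le; auto; [apply Hf | apply Hg | intros x Hx; apply Hfg]; lra. }
    specialize (HPg u v Pu Pv). apply Rabs_lt_between in HPg.
    change (minus _ _) with (RInt g a v - RInt g a u) in HPg. lra. }
  intros u v [Hu Pu] [Hv Pv].
  destruct (Rle_lt_dec u v) as [Huv|Hvu].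
  - apply Hle; auto.
  - apply ball_sym, Hle; auto. lra.
Qed.

Lemma is_RInt_gen_comp_scal (f : R -> V) (c a : R) (l : V) :
  0 < c -> (forall b, c * a <= b -> ex_RInt f (c * a) b) ->
  filterlim (fun b => RInt f (c * a) b) (Rbar_locally p_infty) (locally l) ->
  is_RInt_gen (fun y => scal c (f (c * y))) (at_point a) (Rbar_locally p_infty) l.
Proof.
  intros Hc Hf Hlim.
  assert (Hcomp : forall b, a <= b ->
            is_RInt (fun y => scal c (f (c * y))) a b (RInt f (c * a) (c * b))).
  { intros b Hb.
    assert (Hlin := is_RInt_comp_lin f c 0 a b (RInt f (c * a) (c * b))).
    rewrite !Rplus_0_r in Hlin.
    apply (is_RInt_ext _ _ _ _ _
             (fun y _ => f_equal (fun t => scal c (f t)) (Rplus_0_r (c * y)))).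
    apply Hlin, RInt_correct, Hf. apply Rmult_le_compat_l; lra. }
  apply is_RInt_gen_at_point_p_infty.
  { intros b Hb. eexists. exact (Hcomp b Hb). }
  apply filterlim_ext_loc with (fun b => RInt f (c * a) (c * b)).
  { exists a. intros b Hb. symmetry. apply is_RInt_unique, Hcomp. lra. }
  exact (filterlim_comp _ _ _ _ _ _ _ _ (is_lim_scal_p_infty c Hc) Hlim).
Qed.

End ImproperIntegral.

Lemma filterlim_RInt_exp_decay (K c u : R) : 0 < c ->
  filterlim (fun b => RInt (fun y => K * exp (- (c * y))) u b)
    (Rbar_locally p_infty) (locally (K / c * exp (- (c * u)))).
Proof.
  intros Hc.
  set (F := fun y => - (K / c) * exp (- (c * y))).
  apply filterlim_ext with (fun b => F b - F u).
  { intros b. symmetry. apply is_RInt_unique.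
    apply (is_RInt_derive (V := R_CompleteNormedModule)); intros x _.
    - unfold F. auto_derive; [auto | field; lra].
    - apply (ex_derive_continuous (V := R_NormedModule)). auto_derive. auto. }
  change (is_lim (fun b => F b - F u) p_infty (K / c * exp (- (c * u)))).
  apply (is_lim_minus _ _ p_infty 0 (F u)); [| apply is_lim_const |].
  2: { unfold is_Rbar_minus, is_Rbar_plus, F; simpl. do 2 f_equal. ring. }
  replace (Finite 0) with (Rbar_mult (- (K / c)) 0) by (simpl; f_equal; ring).
  apply is_lim_scal_l.
  apply (is_lim_comp exp (fun y => - (c * y)) p_infty 0 m_infty).
  - apply is_lim_exp_m.
  - apply (is_lim_opp _ p_infty p_infty), is_lim_scal_p_infty, Hc.
  - exists 0. discriminate.
Qed.

Definition Gamma_integrand (nu s : C) (y : R) : C :=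
  (Cexp (- (nu * RtoC y)) * Rcpow y (s - 1))%C.

Definition RGamma_integrand (a sigma y : R) : R :=
  exp (- (a * y)) * exp (ln y * (sigma - 1)).

Lemma Cmod_Cexp (z : C) : Cmod (Cexp z) = exp (Re z).
Proof.
  unfold Cmod, Cexp; simpl.
  transitivity (sqrt (exp (Re z) ^ 2)); [|apply sqrt_pow2, Rlt_le, exp_pos].
  f_equal. pose proof (sin2_cos2 (Im z)) as Hsc. unfold Rsqr in Hsc. simpl. nra.
Qed.

Lemma Cmod_Gamma_integrand (nu s : C) (y : R) :
  Cmod (Gamma_integrand nu s y) = RGamma_integrand (Re nu) (Re s) y.
Proof.
  unfold Gamma_integrand, Rcpow, RGamma_integrand.
  rewrite Cmod_mult, !Cmod_Cexp.
  f_equal; f_equal; unfold Re, RtoC, Cmult, Copp, Cminus, Cplus; simpl; ring.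
Qed.

Lemma Gamma_integrand_RtoC (a sigma y : R) :
  Gamma_integrand (RtoC a) (RtoC sigma) y = RtoC (RGamma_integrand a sigma y).
Proof.
  unfold Gamma_integrand, RGamma_integrand, Cexp, Rcpow, RtoC, Cmult, Copp, Cminus,
    Cplus, Re, Im; simpl.
  replace (- (a * 0 + 0 * y)) with 0 by ring.
  replace (ln y * (0 + - 0) + 0 * (sigma + - (1))) with 0 by ring.
  replace (- (a * y - 0 * 0)) with (- (a * y)) by ring.
  replace (ln y * (sigma + - (1)) - 0 * (0 + - 0)) with (ln y * (sigma - 1)) by ring.
  rewrite cos_0, sin_0. f_equal; ring.
Qed.

Lemma ex_RInt_Gamma_integrand (nu s : C) (u v : R) : 0 < u -> 0 < v ->
  ex_RInt (V := C_R_CompleteNormedModule) (Gamma_integrand nu s) u v.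
Proof.
  intros Hu Hv.
  assert (Hpos : forall z, Rmin u v <= z -> 0 < z)
    by (intros z Hz; pose proof (Rmin_glb_lt u v 0 Hu Hv); lra).
  apply (ex_RInt_fct_extend_pair (U := R_NormedModule) (V := R_NormedModule));
    apply (ex_RInt_continuous (V := R_CompleteNormedModule)); intros z [Hz _];
    apply (ex_derive_continuous (V := R_NormedModule));
    unfold Gamma_integrand, Cexp, Rcpow, Cmult, Copp, Cminus, Cplus, RtoC, Re, Im; simpl;
    auto_derive; specialize (Hpos z Hz); tauto.
Qed.

Lemma ex_RInt_RGamma_integrand (a sigma u v : R) : 0 < u -> 0 < v ->
  ex_RInt (RGamma_integrand a sigma) u v.
Proof.
  intros Hu Hv.
  apply (ex_RInt_continuous (V := R_CompleteNormedModule)). intros z [Hz _].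
  apply (ex_derive_continuous (V := R_NormedModule)).
  unfold RGamma_integrand. auto_derive.
  pose proof (Rmin_glb_lt u v 0 Hu Hv). lra.
Qed.

Lemma exp_le_compat (x y : R) : x <= y -> exp x <= exp y.
Proof. intros [Hxy | ->]; [left; apply exp_increasing, Hxy | right; reflexivity]. Qed.

Lemma ln_mul_le_affine (p c y0 : R) : 0 < c -> 0 < y0 ->
  exists C, forall y, y0 <= y -> ln y * p <= c * y + C.
Proof.
  intros Hc Hy0.
  destruct (Rle_lt_dec p 0) as [Hp|Hp].
  - exists (ln y0 * p). intros y Hy.
    pose proof (ln_le y0 y Hy0 Hy). nra.
  - (* [ln x <= x - 1] at [x = c y / p] *)
    exists (- p * (1 + ln (c / p))). intros y Hy.
    assert (Hcp : 0 < c / p) by (apply Rdiv_lt_0_compat; lra).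
    assert (Hln : ln (c / p * y) <= c / p * y - 1).
    { pose proof (exp_ineq1_le (ln (c / p * y))) as Hexp. rewrite exp_ln in Hexp; nra. }
    rewrite ln_mult in Hln by lra.
    replace (c * y) with (p * (c / p * y)) by (field; lra).
    nra.
Qed.

Lemma RGamma_integrand_le_exp (a sigma y0 : R) : 0 < a -> 0 < y0 ->
  exists K, forall y, y0 <= y -> RGamma_integrand a sigma y <= K * exp (- (a / 2 * y)).
Proof.
  intros Ha Hy0.
  destruct (ln_mul_le_affine (sigma - 1) (a / 2) y0) as [C HC]; [lra | exact Hy0 |].
  exists (exp C). intros y Hy.
  unfold RGamma_integrand. rewrite <- !exp_plus.
  apply exp_le_compat. specialize (HC y Hy). lra.
Qed.

Lemma ex_lim_RInt_RGamma_integrand (a sigma u : R) : 0 < a -> 0 < u ->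
  exists L, filterlim (fun b => RInt (RGamma_integrand a sigma) u b)
              (Rbar_locally p_infty) (locally L).
Proof.
  intros Ha Hu.
  destruct (RGamma_integrand_le_exp a sigma u Ha Hu) as [K HK].
  apply (ex_lim_RInt_dominated (V := R_CompleteNormedModule) _
           (fun y => K * exp (- (a / 2 * y)))).
  - intros b Hb. apply ex_RInt_RGamma_integrand; lra.
  - intros b _. apply (ex_RInt_continuous (V := R_CompleteNormedModule)). intros z _.
    apply (ex_derive_continuous (V := R_NormedModule)). auto_derive. auto.
  - intros x Hx. change (norm _) with (Rabs (RGamma_integrand a sigma x)).
    rewrite Rabs_pos_eq by (unfold RGamma_integrand; pose proof (exp_pos (- (a * x)));
                            pose proof (exp_pos (ln x * (sigma - 1))); nra).
    apply HK, Hx.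
  - eexists. apply filterlim_RInt_exp_decay. lra.
Qed.

Lemma filterlim_RtoC (x : R) : filterlim RtoC (locally x) (locally (RtoC x)).
Proof.
  assert (E : forall k : R, scal (V := C_R_NormedModule) k (RtoC 1) = RtoC k).
  { intros k. unfold scal; simpl; unfold prod_scal, RtoC; simpl.
    unfold scal; simpl; unfold mult; simpl. f_equal; ring. }
  rewrite <- E.
  eapply filterlim_ext; [exact E|].
  apply (filterlim_scal_l (K := R_AbsRing) (V := C_R_NormedModule)).
Qed.

Lemma is_RInt_RtoC (f : R -> R) (u v l : R) :
  is_RInt f u v l -> is_RInt (V := C_R_NormedModule) (fun y => RtoC (f y)) u v (RtoC l).
Proof.
  intros Hf.
  apply (is_RInt_fct_extend_pair (U := R_NormedModule) (V := R_NormedModule)); simpl.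
  - exact Hf.
  - pose proof (is_RInt_const (V := R_NormedModule) u v 0) as H0.
    rewrite (scal_zero_r (V := R_NormedModule)) in H0. exact H0.
Qed.

Lemma Gamma_inc_RtoC (a sigma u L : R) : 0 < u ->
  filterlim (fun b => RInt (RGamma_integrand a sigma) u b) (Rbar_locally p_infty) (locally L) ->
  Gamma_inc (RtoC sigma) u (RtoC a) = RtoC L.
Proof.
  intros Hu HL.
  apply (is_RInt_gen_unique (V := C_R_CompleteNormedModule)).
  apply (is_RInt_gen_at_point_p_infty (V := C_R_CompleteNormedModule)
           (Gamma_integrand (RtoC a) (RtoC sigma))).
  - intros b Hb. apply ex_RInt_Gamma_integrand; lra.
  - apply filterlim_ext_loc with (fun b => RtoC (RInt (RGamma_integrand a sigma) u b)).
    + exists u. intros b Hb. symmetry. apply (is_RInt_unique (V := C_R_CompleteNormedModule)).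
      apply (is_RInt_ext (V := C_R_NormedModule) (fun y => RtoC (RGamma_integrand a sigma y))).
      * intros y _. symmetry. apply Gamma_integrand_RtoC.
      * apply is_RInt_RtoC, (RInt_correct (V := R_CompleteNormedModule)).
        apply ex_RInt_RGamma_integrand; lra.
    + exact (filterlim_comp _ _ _ _ RtoC _ _ _ HL (filterlim_RtoC L)).
Qed.

Lemma is_RInt_gen_Gamma_inc (s : C) (theta : R) (nu : C) : 0 < theta -> 0 < Re nu ->
  is_RInt_gen (V := C_R_CompleteNormedModule) (Gamma_integrand nu s)
    (at_point theta) (Rbar_locally p_infty) (Gamma_inc s theta nu).
Proof.
  intros Htheta Hnu.
  assert (Hex : forall b, theta <= b -> ex_RInt (V := C_R_CompleteNormedModule)
                                          (Gamma_integrand nu s) theta b)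
    by (intros b Hb; apply ex_RInt_Gamma_integrand; lra).
  destruct (ex_lim_RInt_dominated (V := C_R_CompleteNormedModule) (Gamma_integrand nu s)
              (RGamma_integrand (Re nu) (Re s)) theta) as [l Hl].
  - exact Hex.
  - intros b Hb. apply ex_RInt_RGamma_integrand; lra.
  - intros x _. rewrite <- Cmod_norm, Cmod_Gamma_integrand. apply Rle_refl.
  - apply ex_lim_RInt_RGamma_integrand; assumption.
  - apply is_RInt_gen_at_point_p_infty in Hl; [|exact Hex].
    unfold Gamma_inc. fold (Gamma_integrand nu s).
    rewrite (is_RInt_gen_unique _ _ Hl). exact Hl.
Qed.

Lemma RGamma_integrand_le_half (a sigma theta y : R) : 0 < a -> 0 < theta -> theta <= y ->
  RGamma_integrand a sigma y <=
    Rpower 2 sigma * exp (- (a * theta / 2)) * (/ 2 * RGamma_integrand a sigma (/ 2 * y)).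
Proof.
  intros Ha Htheta Hy.
  (* inside a single exponential the claim reads [- a y <= - a (theta + y) / 2] *)
  assert (Hinv2 : / 2 = exp (- ln 2)) by (rewrite exp_Ropp, exp_ln; lra).
  unfold RGamma_integrand, Rpower.
  rewrite ln_mult, ln_Rinv, Hinv2 by lra.
  rewrite <- !exp_plus. apply exp_le_compat. nra.
Qed.

Theorem lemma4p11 (theta : R) (nu s : C) :
  0 < theta -> 0 < Re nu ->
  Cmod (Gamma_inc s theta nu) <=
    Rpower 2 (Re s) * exp (- (Re nu * theta / 2)) *
    Re (Gamma_inc (RtoC (Re s)) (theta / 2) (RtoC (Re nu))).
Proof.
  intros Htheta Hnu.
  set (g := RGamma_integrand (Re nu) (Re s)).
  set (K := Rpower 2 (Re s) * exp (- (Re nu * theta / 2))).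
  destruct (ex_lim_RInt_RGamma_integrand (Re nu) (Re s) (theta / 2)) as [L HL]; [lra.. |].
  rewrite (Gamma_inc_RtoC (Re nu) (Re s) (theta / 2) L); [| lra | exact HL].
  change (Re (RtoC L)) with L.
  assert (Hhalf : is_RInt_gen (V := R_NormedModule)
                    (fun y => scal K (scal (/ 2) (g (/ 2 * y))))
                    (at_point theta) (Rbar_locally p_infty) (scal K L)).
  { apply (is_RInt_gen_scal (V := R_NormedModule)).
    apply (is_RInt_gen_comp_scal (V := R_CompleteNormedModule)); [lra | |].
    - intros b Hb. apply ex_RInt_RGamma_integrand; lra.
    - replace (/ 2 * theta) with (theta / 2) by field. exact HL. }
  rewrite Cmod_norm.
  apply (RInt_gen_norm (V := C_R_CompleteNormedModule) (Fa := at_point theta)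
           (Fb := Rbar_locally p_infty) (Gamma_integrand nu s)
           (fun y => scal K (scal (/ 2) (g (/ 2 * y))))).
  - apply (filter_prod_at_point_p_infty theta (fun a b => a <= b)). intros; lra.
  - apply (filter_prod_at_point_p_infty theta (fun a b => forall y, a <= y /\ y <= b -> _)).
    intros b _ y [Hy _].
    rewrite <- Cmod_norm, Cmod_Gamma_integrand.
    apply RGamma_integrand_le_half; assumption.
  - apply is_RInt_gen_Gamma_inc; assumption.
  - exact Hhalf.
Qed.
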